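(* Let $O$ be an order with property (itov) such that its neighbourhood order $N(O)$ contains no infinite strictly decreasing sequence, and let $\alpha$ be the order type of a well-ordered linear extension of $N(O)$. Then $O$ has a total binary questionable representation of length at most $2\cdot\alpha+1$ (ordinal product: $\alpha$ copies of $2$); more precisely, an order embedding of $O$ into $\mathrm{Next}(2,2\cdot\alpha+1,(O^{0,1})_{2\cdot\alpha+1})$.
   Context: Orders are partial orders; $x\sim y$ means $x\ne y$ and $x,y$ incomparable. $O_{obs1}$ is the order on $\{a,b,c,d\}$ whose only comparabilities are $a<b$, $c<d$; $O_{obs2}$ is the order on $\{a,b,c,d\}$ whose only comparabilities are $a<b$, $c<d$, $c<b$. An order has property (itov) iff it has no induced suborder isomorphic to $O_{obs1}$ or $O_{obs2}$. For $x$ let $D(x)=\{z:z<x\}$, $U(x)=\{z:z>x\}$. The neighbourhood order $N(O)$ has the same domain as $O$ with $x<_{N(O)}y$ iff $D(x)\subseteq D(y)$, $U(x)\subseteq U(y)$ and at least one of these inclusions is strict. $O^{0,1}$ is the two-element total order $0<1$. For an ordinal $j$, $\mathcal O_j=(O_k)_{k<j}$ is a sequence of orders; $(O')_j$ is the constant sequence. A word of length $\ell\le j$ is a sequence $(x_k)_{k<\ell}$ with $x_k\in\mathrm{Dom}(O_k)$. The question of two words $X,Y$ is $(k,x_k,y_k)$ for the least $k<\min(\mathrm{len}X,\mathrm{len}Y)$ with $x_k\neq y_k$, if it exists. $\mathrm{Next}(i,j,\mathcal O_j)$ ($i<j$) is the partial order on all words of length $\ell$ with $i\le \ell<j$ where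 $X<Y$ iff they have a question $(k,x_k,y_k)$ with $x_k<y_k$ in $O_k$, and words without a question or with question items incomparable are incomparable. A questionable representation of $O$ is an injective map $f$ into some $\mathrm{Next}(i,j,\mathcal O_j)$ with $f(x)<f(y)\iff x<y$; its length is $j$, its width the supremum of $|\mathrm{Dom}(O_k)|$; it is total if all $O_k$ are total orders, binary if total of width 2. *)

From Stdlib Require Import Relations Wellfounded.
Set Implicit Arguments.

Section Orders.
Variable T : Type.
Variable lt : T -> T -> Prop.

Definition strict_porder : Prop :=
  (forall x, ~ lt x x) /\ (forall x y z, lt x y -> lt y z -> lt x z).

Definition incomp (x y : T) : Prop := x <> y /\ ~ lt x y /\ ~ lt y x.

Definition has_obs1 : Prop :=
  exists a b c d, lt a b /\ lt c d /\
    incomp a c /\ incomp a d /\ incomp b c /\ incomp b d.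

Definition has_obs2 : Prop :=
  exists a b c d, lt a b /\ lt c d /\ lt c b /\
    incomp a c /\ incomp a d /\ incomp b d.

Definition itov : Prop := ~ has_obs1 /\ ~ has_obs2.

Definition nbh_lt (x y : T) : Prop :=
  (forall z, lt z x -> lt z y) /\ (forall z, lt x z -> lt y z) /\
  ((exists z, lt z y /\ ~ lt z x) \/ (exists z, lt y z /\ ~ lt x z)).

Definition no_inf_decr (r : T -> T -> Prop) : Prop :=
  ~ exists s : nat -> T, forall n, r (s (S n)) (s n).

Definition wo_linear_extension (r L : T -> T -> Prop) : Prop :=
  (forall x, ~ L x x) /\ (forall x y z, L x y -> L y z -> L x z) /\
  (forall x y, x <> y -> L x y \/ L y x) /\
  (forall x y, r x y -> L x y) /\
  well_founded L.
End Orders.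

(* ---- Questionable representations ----
   Positions are a strictly (well-)ordered type P which plays the role of the
   ordinal j (the set of ordinals < j).  A length l < j is an element of P,
   denoting the ordinal l = {k in P | k < l}.  O_k is given by (D k, ltD k). *)
Section Next.
Variable P : Type.
Variable ltP : P -> P -> Prop.
Variable D : P -> Type.
Variable ltD : forall k, D k -> D k -> Prop.

Record word := Word { wlen : P; wval : forall k : P, option (D k) }.

Fixpoint ord_ge_nat (n : nat) (l : P) : Prop :=
  match n with
  | O => True
  | S m => exists k, ltP k l /\ ord_ge_nat m k
  end.

Definition in_Next (i : nat) (w : word) : Prop :=
  ord_ge_nat i (wlen w) /\
  (forall k, ltP k (wlen w) <-> exists a, wval w k = Some a).

Definition next_lt (X Y : word) : Prop :=
  exists k, ltP k (wlen X) /\ ltP k (wlen Y) /\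
    (forall k', ltP k' k -> wval X k' = wval Y k') /\
    exists a b, wval X k = Some a /\ wval Y k = Some b /\ ltD a b.

Definition embeds_into_Next (T : Type) (lt : T -> T -> Prop) (i : nat) : Prop :=
  exists f : T -> word,
    (forall x, in_Next i (f x)) /\
    (forall x y, f x = f y -> x = y) /\
    (forall x y, lt x y <-> next_lt (f x) (f y)).
End Next.

(* The ordinal 2*alpha + 1 for alpha = (T, L): alpha copies of 2 = {0<1}
   (lexicographic, alpha-coordinate major), followed by one top element None. *)
Definition pos2a1 (T : Type) := option (T * bool).

Definition lt_pos2a1 (T : Type) (L : T -> T -> Prop) (p q : pos2a1 T) : Prop :=
  match p, q with
  | Some (a, b), Some (a', b') => L a a' \/ (a = a' /\ b = false /\ b' = true)
  | Some _, None => True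
  | None, _ => False
  end.

Definition lt01 (a b : bool) : Prop := a = false /\ b = true.

From Stdlib Require Import Relations Wellfounded Classical ClassicalEpsilon.
Set Implicit Arguments.
Unset Strict Implicit.

(* Fix a well-ordered linear extension L of N(O).  The word of x has, for
   every a <=_L x, a block of two letters [a < x] and [~ x < a], and it ends
   right after the block of x.  Letters are monotone in x, so when x < y the
   first difference of the two words favours y.  Conversely, (itov) says
   that if x ~ y and y ~ a, then x < a or a < x forces y <_N a; hence
   incomparable x and y relate in the same way to every a <=_L x, y, and
   their words agree on their common part. *)

Lemma lt_or_gt_or_eq_or_incomp (T : Type) (lt : relation T) (x y : T) :
  lt x y \/ lt y x \/ x = y \/ incomp lt x y.
Proof.
  unfold incomp.
  destruct (classic (lt x y)), (classic (lt y x)), (classic (x = y)); tauto.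
Qed.

Lemma incomp_sym (T : Type) (lt : relation T) (x y : T) :
  incomp lt x y -> incomp lt y x.
Proof. intros [Hne H]; split; [congruence | tauto]. Qed.

Lemma incomp_transp (T : Type) (lt : relation T) (x y : T) :
  incomp (transp T lt) x y <-> incomp lt x y.
Proof. unfold incomp, transp; tauto. Qed.

Lemma has_obs1_transp (T : Type) (lt : relation T) :
  has_obs1 (transp T lt) -> has_obs1 lt.
Proof.
  intros (a & b & c & d & Hba & Hdc & Hac & Had & Hbc & Hbd).
  rewrite incomp_transp in Hac, Had, Hbc, Hbd.
  exists b, a, d, c; tauto.
Qed.

Lemma has_obs2_transp (T : Type) (lt : relation T) :
  has_obs2 (transp T lt) -> has_obs2 lt.
Proof.
  intros (a & b & c & d & Hba & Hdc & Hbc & Hac & Had & Hbd).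
  rewrite incomp_transp in Hac, Had, Hbd.
  exists d, c, b, a; auto 8 using incomp_sym.
Qed.

Lemma well_founded_minimal (A : Type) (R : relation A) (P : A -> Prop) :
  well_founded R -> (exists a, P a) -> exists m, P m /\ forall z, R z m -> ~ P z.
Proof.
  intros wf [a Pa]. apply NNPP; intro Hnone.
  induction a as [a IH] using (well_founded_ind wf).
  apply Hnone. exists a; split; [exact Pa | exact IH].
Qed.

Definition truth (P : Prop) : bool :=
  if excluded_middle_informative P then true else false.

Lemma truth_iff (P : Prop) : truth P = true <-> P.
Proof. unfold truth; destruct (excluded_middle_informative P); intuition congruence. Qed.

Lemma truth_false (P : Prop) : ~ P -> truth P = false.
Proof. unfold truth; destruct (excluded_middle_informative P); tauto. Qed.

Lemma truth_ext (P Q : Prop) : (P <-> Q) -> truth P = truth Q.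
Proof.
  unfold truth; intro H.
  destruct (excluded_middle_informative P), (excluded_middle_informative Q); tauto.
Qed.

Section ItovDownSets.
Variables (T : Type) (lt : relation T).
Hypothesis lt_trans : forall x y z, lt x y -> lt y z -> lt x z.
Hypothesis no_obs1 : ~ has_obs1 lt.
Hypothesis no_obs2 : ~ has_obs2 lt.

Lemma down_incl_of_incomp_lt (x y a : T) :
  incomp lt x y -> incomp lt y a -> lt x a -> forall z, lt z y -> lt z a.
Proof.
  intros Hxy Hya Hxa z Hzy. apply NNPP; intro Nza.
  pose proof Hxy as (Exy & Nxy & Nyx). pose proof Hya as (Eya & Nya & Nay).
  assert (Hza : incomp lt z a).
  { repeat split; [intros -> | | intro Haz]; eauto. }
  assert (Hzx : incomp lt z x).
  { repeat split; [intros -> | intro Hzx | intro Hxz]; eauto. }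
  apply no_obs1. exists z, y, x, a; auto 7 using incomp_sym.
Qed.

Lemma down_incl_of_incomp_gt (x y a : T) :
  incomp lt x y -> incomp lt y a -> lt a x -> forall z, lt z y -> lt z a.
Proof.
  intros Hxy Hya Hax z Hzy. apply NNPP; intro Nza.
  pose proof Hxy as (Exy & Nxy & Nyx). pose proof Hya as (Eya & Nya & Nay).
  assert (Haz : incomp lt a z).
  { repeat split; [intros <- | intro Haz | ]; eauto. }
  destruct (classic (lt z x)) as [Hzx | Nzx].
  - apply no_obs2. exists a, x, z, y; auto 7 using incomp_sym.
  - assert (Hxz : incomp lt x z).
    { repeat split; [intros <- | intro Hxz | ]; eauto. }
    apply no_obs1. exists a, x, z, y; auto 7 using incomp_sym.
Qed.

End ItovDownSets.

Section ItovNeighbourhood.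
Variables (T : Type) (lt : relation T).
Hypothesis lt_trans : forall x y z, lt x y -> lt y z -> lt x z.
Hypothesis no_obs1 : ~ has_obs1 lt.
Hypothesis no_obs2 : ~ has_obs2 lt.

Let transp_trans (x y z : T) : transp T lt x y -> transp T lt y z -> transp T lt x z.
Proof. unfold transp; eauto. Qed.

Let transp_no_obs1 : ~ has_obs1 (transp T lt).
Proof. intro H; exact (no_obs1 (has_obs1_transp H)). Qed.

Let transp_no_obs2 : ~ has_obs2 (transp T lt).
Proof. intro H; exact (no_obs2 (has_obs2_transp H)). Qed.

(* (itov) and N(O) are self-dual, so each up-set inclusion below is a
   down-set inclusion for the dual order. *)

Lemma nbh_lt_of_incomp_lt (x y a : T) :
  incomp lt x y -> incomp lt y a -> lt x a -> nbh_lt lt y a.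
Proof.
  intros Hxy Hya Hxa. split; [|split].
  - exact (down_incl_of_incomp_lt lt_trans no_obs1 Hxy Hya Hxa).
  - apply (down_incl_of_incomp_gt transp_trans transp_no_obs1 transp_no_obs2 (x := x));
      [apply incomp_transp; assumption .. | exact Hxa].
  - left. exists x. destruct Hxy as (_ & Nxy & _). auto.
Qed.

Lemma nbh_lt_of_incomp_gt (x y a : T) :
  incomp lt x y -> incomp lt y a -> lt a x -> nbh_lt lt y a.
Proof.
  intros Hxy Hya Hax. split; [|split].
  - exact (down_incl_of_incomp_gt lt_trans no_obs1 no_obs2 Hxy Hya Hax).
  - apply (down_incl_of_incomp_lt transp_trans transp_no_obs1 (x := x));
      [apply incomp_transp; assumption .. | exact Hax].
  - right. exists x. destruct Hxy as (_ & _ & Nyx). auto.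
Qed.

End ItovNeighbourhood.

Section Encoding.
Variables (T : Type) (lt : relation T).
Hypothesis lt_irrefl : forall x, ~ lt x x.
Hypothesis lt_trans : forall x y z, lt x y -> lt y z -> lt x z.
Hypothesis no_obs1 : ~ has_obs1 lt.
Hypothesis no_obs2 : ~ has_obs2 lt.
Variable L : relation T.
Hypothesis L_irrefl : forall x, ~ L x x.
Hypothesis L_trans : forall x y z, L x y -> L y z -> L x z.
Hypothesis L_total : forall x y, x <> y -> L x y \/ L y x.
Hypothesis L_ext : forall x y, nbh_lt lt x y -> L x y.
Hypothesis L_wf : well_founded L.

Definition Lle (a x : T) : Prop := L a x \/ a = x.

Lemma L_Lle_trans (a b x : T) : L a b -> Lle b x -> L a x.
Proof. intros Hab [Hbx | <-]; eauto. Qed.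

Lemma Lle_L_trans (a b x : T) : Lle a b -> L b x -> L a x.
Proof. intros [Hab | ->] Hbx; eauto. Qed.

Lemma Lle_antisym (x y : T) : Lle x y -> Lle y x -> x = y.
Proof. intros [Hxy | ?] [Hyx | ?]; auto. destruct (L_irrefl (L_trans Hxy Hyx)). Qed.

Lemma incomp_transfer_below (u v a : T) :
  incomp lt u v -> Lle a v -> (lt u a -> lt v a) /\ (lt a u -> lt a v).
Proof.
  intros Huv [Hav | <-]; [| destruct Huv as (_ & Nuv & Nvu); tauto].
  assert (L_asym : ~ L v a) by (intro Hva; exact (L_irrefl (L_trans Hav Hva))).
  split; intro H; apply NNPP; intro N;
    destruct (lt_or_gt_or_eq_or_incomp lt v a) as [Hva | [Hav' | [<- | Hva]]];
    try tauto; try (destruct (L_irrefl Hav)).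
  - destruct Huv as (_ & Nuv & _); eauto.
  - exact (L_asym (L_ext (nbh_lt_of_incomp_lt lt_trans no_obs1 no_obs2 Huv Hva H))).
  - destruct Huv as (_ & _ & Nvu); eauto.
  - exact (L_asym (L_ext (nbh_lt_of_incomp_gt lt_trans no_obs1 no_obs2 Huv Hva H))).
Qed.

Definition letter (x a : T) (b : bool) : bool :=
  if b then negb (truth (lt x a)) else truth (lt a x).

Lemma letter_monotone (x y a : T) (b : bool) :
  lt x y -> letter x a b = true -> letter y a b = true.
Proof.
  unfold letter; intros Hxy; destruct b.
  - rewrite !Bool.negb_true_iff. intro Hx; apply truth_false; intro Hya.
    assert (truth (lt x a) = true) by (apply truth_iff; eauto). congruence.
  - rewrite !truth_iff; eauto.
Qed.

Lemma letter_lt01 (x y a : T) (b : bool) :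
  lt x y -> letter x a b <> letter y a b -> lt01 (letter x a b) (letter y a b).
Proof.
  intros Hxy Hne. pose proof (@letter_monotone x y a b Hxy) as Hmono.
  unfold lt01; destruct (letter x a b), (letter y a b); intuition congruence.
Qed.

Lemma letter_eq_of_incomp (x y a : T) (b : bool) :
  incomp lt x y -> Lle a x -> Lle a y -> letter x a b = letter y a b.
Proof.
  intros Hxy Hax Hay.
  destruct (incomp_transfer_below Hxy Hay), (incomp_transfer_below (incomp_sym Hxy) Hax).
  unfold letter; destruct b; [f_equal|]; apply truth_ext; tauto.
Qed.

Definition letters (x : T) (k : pos2a1 T) : option bool :=
  match k with
  | Some (a, b) =>
      if excluded_middle_informative (Lle a x) then Some (letter x a b) else None
  | None => None
  end.

Lemma letters_below (x a : T) (b : bool) :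
  Lle a x -> letters x (Some (a, b)) = Some (letter x a b).
Proof. simpl; destruct (excluded_middle_informative (Lle a x)); tauto. Qed.

Lemma letters_Some (x a : T) (b v : bool) :
  letters x (Some (a, b)) = Some v -> Lle a x /\ letter x a b = v.
Proof.
  simpl; destruct (excluded_middle_informative (Lle a x)); [|discriminate].
  intro E; injection E; auto.
Qed.

Lemma letters_defined (x : T) (k : pos2a1 T) :
  (exists v, letters x k = Some v) <-> exists a b, k = Some (a, b) /\ Lle a x.
Proof.
  split.
  - intros [v Hv]. destruct k as [[a b] |]; [| discriminate].
    exists a, b. split; [reflexivity | exact (proj1 (letters_Some Hv))].
  - intros (a & b & -> & Hax). eexists. exact (letters_below b Hax).
Qed.

(* The word of x ends at (s, false) for the L-successor s of x, or at the
   top position if x is L-maximal. *)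
Lemma exists_word_length (x : T) :
  exists p, forall k, lt_pos2a1 L k p <-> exists v, letters x k = Some v.
Proof.
  setoid_rewrite letters_defined.
  assert (Lle_or_gt : forall a, Lle a x \/ L x a).
  { intro a. destruct (classic (a = x)) as [-> | Hne]; [left; right; reflexivity|].
    destruct (L_total Hne); [left; left |]; auto. }
  destruct (classic (exists s, L x s)) as [Hsucc | Hmax].
  - destruct (well_founded_minimal L_wf Hsucc) as (s & Hxs & Hmin).
    exists (Some (s, false)). intros [[a b] |]; simpl; split.
    + intros [Has | (_ & _ & E)]; [| discriminate].
      exists a, b. split; [reflexivity|].
      destruct (Lle_or_gt a) as [Hax | Hxa]; [exact Hax | destruct (Hmin a Has Hxa)].
    + intros (a' & b' & E & Hax). injection E as -> ->. left. exact (Lle_L_trans Hax Hxs).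
    + tauto.
    + intros (? & ? & E & _); discriminate.
  - exists None. intros [[a b] |]; simpl; split.
    + intros _. exists a, b. split; [reflexivity|].
      destruct (Lle_or_gt a) as [Hax | Hxa]; [exact Hax | destruct (Hmax (ex_intro _ a Hxa))].
    + auto.
    + tauto.
    + intros (? & ? & E & _); discriminate.
Qed.

Definition word_length (x : T) : pos2a1 T :=
  proj1_sig (constructive_indefinite_description _ (exists_word_length x)).

Lemma word_length_spec (x : T) (k : pos2a1 T) :
  lt_pos2a1 L k (word_length x) <-> exists v, letters x k = Some v.
Proof.
  exact (proj2_sig (constructive_indefinite_description _ (exists_word_length x)) k).
Qed.

Definition word_of (x : T) : word (fun _ : pos2a1 T => bool) :=
  Word _ (word_length x) (letters x).

Lemma word_of_in_Next (x : T) : in_Next (lt_pos2a1 L) 2 (word_of x).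
Proof.
  split; [| exact (word_length_spec x)].
  exists (Some (x, true)). split.
  - apply word_length_spec. eexists. apply letters_below. right; reflexivity.
  - exists (Some (x, false)). simpl; auto.
Qed.

Lemma word_of_injective (x y : T) : word_of x = word_of y -> x = y.
Proof.
  assert (Hle : forall u v, word_of u = word_of v -> Lle u v).
  { intros u v E.
    assert (Ev : letters u (Some (u, false)) = letters v (Some (u, false)))
      by exact (f_equal (fun w => wval w (Some (u, false))) E).
    rewrite letters_below in Ev by (right; reflexivity).
    exact (proj1 (letters_Some (eq_sym Ev))). }
  intro E. apply Lle_antisym; apply Hle; congruence.
Qed.

Lemma lt_of_word_lt (x y : T) :
  next_lt (lt_pos2a1 L) (fun _ => lt01) (word_of x) (word_of y) -> lt x y.
Proof.
  intros (k & _ & _ & _ & u & v & Hu & Hv & Huv). simpl in Hu, Hv.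
  destruct k as [[a b] |]; [| discriminate].
  apply letters_Some in Hu as [Hax <-]. apply letters_Some in Hv as [Hay <-].
  destruct Huv as [Hx Hy].
  destruct (lt_or_gt_or_eq_or_incomp lt x y) as [Hxy | [Hyx | [<- | Hxy]]];
    [exact Hxy | exfalso ..].
  - rewrite (letter_monotone Hyx Hy) in Hx. discriminate.
  - congruence.
  - rewrite (letter_eq_of_incomp b Hxy Hax Hay) in Hx. congruence.
Qed.

Lemma word_lt_at (x y a : T) (b : bool) :
  lt x y -> Lle a x -> Lle a y -> letter x a b <> letter y a b ->
  (forall k, lt_pos2a1 L k (Some (a, b)) -> letters x k = letters y k) ->
  next_lt (lt_pos2a1 L) (fun _ => lt01) (word_of x) (word_of y).
Proof.
  intros Hxy Hax Hay Hne Hagree.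
  exists (Some (a, b)). split; [| split; [| split]].
  - apply word_length_spec. eexists. exact (letters_below b Hax).
  - apply word_length_spec. eexists. exact (letters_below b Hay).
  - exact Hagree.
  - exists (letter x a b), (letter y a b).
    cbn [wval word_of]. rewrite !letters_below by assumption. auto using letter_lt01.
Qed.

Lemma word_lt_of_lt (x y : T) :
  lt x y -> next_lt (lt_pos2a1 L) (fun _ => lt01) (word_of x) (word_of y).
Proof.
  intro Hxy.
  pose (differ a := Lle a x /\ Lle a y /\ exists b, letter x a b <> letter y a b).
  assert (Hdiffer : exists a, differ a).
  { assert (Hne : x <> y) by (intros ->; exact (lt_irrefl Hxy)).
    unfold differ, letter.
    destruct (L_total Hne) as [Lxy | Lyx].
    - exists x. split; [right | split; [left | exists false]]; auto.
      rewrite (truth_false (@lt_irrefl x)), (proj2 (truth_iff _) Hxy). discriminate.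
    - exists y. split; [left | split; [right | exists true]]; auto.
      rewrite (truth_false (@lt_irrefl y)), (proj2 (truth_iff _) Hxy). discriminate. }
  destruct (well_founded_minimal L_wf Hdiffer) as (m & (Hmx & Hmy & b & Hb) & Hmin).
  assert (Hbelow : forall a b', L a m -> letters x (Some (a, b')) = letters y (Some (a, b'))).
  { intros a b' Ham.
    assert (Hax : Lle a x) by (left; exact (L_Lle_trans Ham Hmx)).
    assert (Hay : Lle a y) by (left; exact (L_Lle_trans Ham Hmy)).
    rewrite !letters_below by assumption. f_equal.
    apply NNPP; intro Hne. apply (Hmin a Ham). repeat split; eauto. }
  destruct (Bool.bool_dec (letter x m false) (letter y m false)) as [E | E].
  - assert (Hb' : b = true) by (destruct b; congruence). subst b.
    apply (word_lt_at Hxy Hmx Hmy Hb).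
    intros [[a b'] |] Hk; [| destruct Hk].
    destruct Hk as [Ham | (-> & -> & _)]; auto.
    rewrite !letters_below by assumption. congruence.
  - apply (word_lt_at Hxy Hmx Hmy E).
    intros [[a b'] |] Hk; [| destruct Hk].
    destruct Hk as [Ham | (_ & _ & F)]; [auto | discriminate].
Qed.

End Encoding.

Theorem theorem4p4 (T : Type) (lt : T -> T -> Prop)
  (hO : strict_porder lt) (hitov : itov lt)
  (hN : no_inf_decr (nbh_lt lt))
  (L : T -> T -> Prop) (hL : wo_linear_extension (nbh_lt lt) L) :
  embeds_into_Next (lt_pos2a1 L) (fun _ : pos2a1 T => bool)
    (fun _ : pos2a1 T => lt01) lt 2.
Proof.
  destruct hO as [lt_irrefl lt_trans], hitov as [no_obs1 no_obs2],
    hL as (L_irrefl & L_trans & L_total & L_ext & L_wf).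
  exists (word_of lt L_trans L_total L_wf).
  split; [| split].
  - apply word_of_in_Next.
  - apply word_of_injective; assumption.
  - intros x y; split; [apply word_lt_of_lt | apply lt_of_word_lt]; assumption.
Qed.
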